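(* Consider AdaFTRL with $1/2$-Tsallis entropy for $K$-armed bandits relying on a known upper bound $M$ on the payoffs (described in the context). For all $m\in\mathbb{R}$ with $m\le M$, all oblivious sequences $y_1,y_2,\dots$ in $[m,M]^K$ and all $T\ge1$, \[ R_T(y_{1:T})\le 4(M-m)\sqrt{KT}+2(M-m). \]
   Context: Oblivious adversarial $K$-armed bandits ($K\ge2$): reward vectors $y_t\in[m,M]^K$ fixed beforehand; at round $t$ the player draws $A_t\sim p_t$ and observes only $y_{t,A_t}$; $R_T(y_{1:T})=\max_a\sum_{t=1}^Ty_{t,a}-\mathbb{E}[\sum_{t=1}^Ty_{t,A_t}]$. The player knows $M$ but not $m$. Let $\mathcal{S}$ be the probability simplex over $[K]$, $H_{1/2}(p)=-\sum_{a=1}^K2\sqrt{p_a}$ (for $p\in[0,\infty)^K$), and for $q$ with all $q_a>0$, $B(p,q)=H_{1/2}(p)-H_{1/2}(q)-\langle\nabla H_{1/2}(q),p-q\rangle=\sum_a(\sqrt{p_a}-\sqrt{q_a})^2/\sqrt{q_a}$. Algorithm (input $M$): $\eta_1=+\infty$, $p_1=(1/K,\dots,1/K)$. For $t\ge1$: draw $A_t\sim p_t$; observe $y_{t,A_t}$; set $\widehat y_{t,a}=\frac{y_{t,a}-M}{p_{t,a}}\mathbf{1}\{A_t=a\}+M$; compute $\delta_t=\max_{p\in\mathcal{S}}\{\langle p_t-p,-\widehat y_t\rangle-B(p,p_t)/\eta_t\}$ (with the convention $B(p,p_t)/\eta_t=0$ when $\eta_t=+\infty$); set $\eta_{t+1}=2(\sqrt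 K-1)/\sum_{s=1}^t\delta_s$; set $p_{t+1}\in\arg\min_{p\in\mathcal{S}}\bigl\{-\sum_{a}p_a\sum_{s=1}^t\widehat y_{s,a}-\frac1{\eta_{t+1}}\sum_a2\sqrt{p_a}\bigr\}$. *)

From HB Require Import structures.
From mathcomp Require Import all_boot all_order all_algebra.
From mathcomp Require Import all_classical all_reals.
Set Implicit Arguments. Unset Strict Implicit. Unset Printing Implicit Defensive.
Import Order.TTheory GRing.Theory Num.Theory.
Local Open Scope classical_set_scope.
Local Open Scope ring_scope.

(* Conventions:
   - actions are 'I_K;
   - rounds are 0-based: y t is the reward vector y_{t+1} of the paper;
   - a history is a sequence of past actions stored MOST RECENT FIRST:
     h = [:: A_t; ...; A_1] (so size h = t);
   - a policy p maps a history h of size t to the distribution p_{t+1};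
   - instead of eta we track inv_eta = 1/eta (inv_eta = 0 <-> eta = +oo). *)

Section Bandit.
Variables (R : realType) (K : nat).

Definition in_simplex (q : 'I_K -> R) : Prop :=
  (forall a, 0 <= q a) /\ \sum_(a < K) q a = 1.

Definition tsallis (q : 'I_K -> R) : R := - \sum_(a < K) 2 * Num.sqrt (q a).

Definition bregman (q r : 'I_K -> R) : R :=
  \sum_(a < K) (Num.sqrt (q a) - Num.sqrt (r a)) ^+ 2 / Num.sqrt (r a).

Variables (M : R) (y : nat -> 'I_K -> R) (p : seq 'I_K -> 'I_K -> R).

(* importance-weighted estimate hat y_{t+1} at the round following history h
   (size h = t) when the action drawn is A *)
Definition yhat (h : seq 'I_K) (A : 'I_K) (a : 'I_K) : R :=
  (y (size h) a - M) / p h a * (A == a)%:R + M.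

Fixpoint Lhat (h : seq 'I_K) (a : 'I_K) : R :=
  match h with
  | [::] => 0
  | A :: h' => Lhat h' a + yhat h' A a
  end.

(* delta at the round following history h, with action A, given 1/eta = ie;
   B(q,p_t)/eta is multiplied by ie, hence is 0 when eta = +oo *)
Definition delta (ie : R) (h : seq 'I_K) (A : 'I_K) : R :=
  sup [set v | exists q, in_simplex q /\
     v = \sum_(a < K) (p h a - q a) * (- yhat h A a) - ie * bregman q (p h)].

Fixpoint inv_eta (h : seq 'I_K) : R :=
  match h with
  | [::] => 0
  | A :: h' => inv_eta h' +
      delta (inv_eta h') h' A / (2 * (Num.sqrt (K%:R) - 1))
  end.

Definition ftrl_obj (h : seq 'I_K) (q : 'I_K -> R) : R :=
  - \sum_(a < K) q a * Lhat h a - inv_eta h * \sum_(a < K) 2 * Num.sqrt (q a).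

(* p is a valid run of AdaFTRL (any argmin selection is allowed) *)
Definition adaftrl_policy : Prop :=
  (forall a, p [::] a = 1 / K%:R) /\
  (forall A h, in_simplex (p (A :: h)) /\
     forall q, in_simplex q -> ftrl_obj (A :: h) (p (A :: h)) <= ftrl_obj (A :: h) q).

(* expected reward collected during the next n rounds from history h,
   when A_t ~ p_t sequentially: V h 0 = 0,
   V h (n+1) = sum_a p_h(a) (y_{size h}(a) + V (a :: h) n) *)
Fixpoint exp_reward (h : seq 'I_K) (n : nat) : R :=
  match n with
  | 0 => 0
  | n'.+1 => \sum_(a < K) p h a * (y (size h) a + exp_reward (a :: h) n')
  end.

Definition regret (T : nat) : R :=
  sup (range (fun a : 'I_K => \sum_(t < T) y t a)) - exp_reward [::] T.

End Bandit.

From Pilot Require Import Defs.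
From HB Require Import structures.
From mathcomp Require Import all_boot all_order all_algebra.
From mathcomp Require Import all_classical all_reals.
From mathcomp Require Import ring lra.
Set Implicit Arguments.
Unset Strict Implicit.
Unset Printing Implicit Defensive.
Import Order.TTheory GRing.Theory Num.Theory.
Local Open Scope ring_scope.

(* Write D_t = delta_1 + ... + delta_t = 2 (sqrt K - 1) / eta_{t+1}.  The
   first-order optimality of p_t for its Tsallis-regularized objective supplies
   the Bregman term subtracted in delta_t, so the minimal value of the objective
   telescopes; evaluating the objective at a vertex e_u and using
   sum_a sqrt q_a <= sqrt K on the simplex bounds the regret measured on the
   estimates by 2 D_T.  Each increment satisfies delta_t <= M - m and
   delta_t / eta_t <= b_t := (M - y_{t,A_t})^2 / sqrt p_{t,A_t}, hence
   D_T^2 <= 4 (sqrt K - 1) sum_t b_t + (M - m) D_T and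
   D_T <= (M - m) + sqrt (4 (sqrt K - 1) sum_t b_t).  In expectation over the
   actions the estimates are unbiased on the played arm and overestimate the
   comparator, E[b_t | past] <= (M - m)^2 sqrt K, and Jensen's inequality for
   sqrt gives 2 (M - m) + 4 (M - m) sqrt (K T). *)

Section RealFacts.
Variable R : rcfType.
Implicit Types a c e ie k r s t u v x C D G : R.

Lemma ge0_of_ge_vanishing G C :
  (forall t, 0 < t <= 1 -> - (t * C) <= G) -> 0 <= G.
Proof.
move=> lb; rewrite leNgt; apply/negP => G_lt0.
have C0 := normr_ge0 C; have den_gt0 : 0 < - G + `|C| + 1 by lra.
pose t := - G / (- G + `|C| + 1).
have t_gt0 : 0 < t by rewrite divr_gt0 // oppr_gt0.
have t_le1 : t <= 1 by rewrite ler_pdivrMr // mul1r; lra.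
have tC_lt : t * `|C| < - G by rewrite mulrAC ltr_pdivrMr //; nra.
have := lb t; rewrite t_gt0 t_le1 => /(_ isT).
have := ler_wpM2l (ltW t_gt0) (real_ler_norm (num_real C)); lra.
Qed.

Lemma sqrt_ge_sqr s r : 0 <= s -> 0 <= r -> s ^+ 2 <= r -> s <= Num.sqrt r.
Proof.
by move=> s0 r0 sr; rewrite -(ler_sqr s0 (sqrtr_ge0 r)) sqr_sqrtr.
Qed.

Lemma sqrt_sub_ge_taylor v u e : 0 < v -> 0 <= u -> u ^+ 2 = v ^+ 2 + e ->
  e / (2 * v) - e ^+ 2 / (2 * v ^+ 3) <= u - v.
Proof.
move=> v_gt0 u0 ue; have -> : e = u ^+ 2 - v ^+ 2 by rewrite ue; ring.
rewrite -subr_ge0.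
have -> : u - v - ((u ^+ 2 - v ^+ 2) / (2 * v) - (u ^+ 2 - v ^+ 2) ^+ 2 / (2 * v ^+ 3))
    = u * (u - v) ^+ 2 * (u + 2 * v) / (2 * v ^+ 3).
  by field; rewrite gt_eqF.
have v3 : 0 <= 2 * v ^+ 3 by rewrite mulr_ge0 // exprn_ge0 // (ltW v_gt0).
by rewrite divr_ge0 // mulr_ge0 ?(mulr_ge0 u0 (sqr_ge0 _)) //; lra.
Qed.

Lemma le_add_sqrt_of_sqr_le x a D : 0 <= x -> 0 <= a -> 0 <= D ->
  x ^+ 2 <= a + D * x -> x <= D + Num.sqrt a.
Proof.
move=> x0 a0 D0 xa; rewrite leNgt; apply/negP => x_gt.
have sa0 := sqrtr_ge0 a; have := sqr_sqrtr a0; nra.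
Qed.

Lemma stability_sqrt_bound s r c ie : 0 < s -> 0 <= r -> 0 <= c -> 0 <= ie ->
  ie * ((s ^+ 2 - r ^+ 2) * c) - ie ^+ 2 * ((r - s) ^+ 2 / s) <= c ^+ 2 * s ^+ 3.
Proof.
move=> s_gt0 r0 c0 ie0; rewrite -(ler_pM2r s_gt0).
have -> : (ie * ((s ^+ 2 - r ^+ 2) * c) - ie ^+ 2 * ((r - s) ^+ 2 / s)) * s
    = ie * (s - r) * ((s + r) * c * s) - (ie * (s - r)) ^+ 2.
  by field; rewrite gt_eqF.
set x := ie * (s - r).
have [x_le0|x_gt0] := lerP x 0.
  have : 0 <= (s + r) * c * s by rewrite !mulr_ge0 //; lra.
  have := sqr_ge0 x; have := sqr_ge0 (c * s ^+ 2); nra.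
have r_lt : r < s by move: x_gt0; rewrite /x; nra.
have : x * ((s + r) * c * s) <= x * (2 * s * c * s).
  by rewrite ler_pM2l // !ler_wpM2r //; lra.
have := sqr_ge0 (x - c * s ^+ 2); nra.
Qed.

Lemma sqrt_budget_le k D t : 0 <= k -> 0 <= D -> 0 <= t ->
  2 * Num.sqrt (2 * (2 * (Num.sqrt k - 1)) * (t * (D ^+ 2 * Num.sqrt k)))
    <= 4 * D * Num.sqrt (k * t).
Proof.
move=> k0 D0 t0; have sk0 := sqrtr_ge0 k; have sk2 := sqr_sqrtr k0.
have budget : 2 * (2 * (Num.sqrt k - 1)) * (t * (D ^+ 2 * Num.sqrt k))
    <= (2 * D) ^+ 2 * (k * t).
  have : 0 <= t * D ^+ 2 * Num.sqrt k by rewrite !mulr_ge0 ?sqr_ge0.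
  move: sk2; set s := Num.sqrt k => <-; nra.
rewrite -ler_sqrt ?mulr_ge0 ?sqr_ge0 // in budget.
rewrite sqrtrM ?sqr_ge0 // sqrtr_sqr ger0_norm ?mulr_ge0 // in budget.
by lra.
Qed.

End RealFacts.

Section Simplex.
Variables (R : realType) (K : nat).
Implicit Types (q w x : 'I_K -> R) (t : R).

Definition unit_vec (b : 'I_K) : 'I_K -> R := fun a => (b == a)%:R.

Lemma sum_unit_vecM b (F : 'I_K -> R) : \sum_a unit_vec b a * F a = F b.
Proof.
rewrite (bigD1 b) //= /unit_vec eqxx mul1r big1 ?addr0 // => a.
by rewrite eq_sym => /negPf ->; rewrite mul0r.
Qed.

Lemma unit_vec_simplex b : in_simplex (unit_vec b).
Proof.
split=> [a|]; first exact: ler0n.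
by have := sum_unit_vecM b (fun _ => 1); under eq_bigr do rewrite mulr1.
Qed.

Lemma uniform_simplex : (0 < K)%N -> in_simplex (fun _ : 'I_K => 1 / (K%:R : R)).
Proof.
move=> K_gt0; split=> [a|]; first by rewrite divr_ge0.
by rewrite sumr_const card_ord -[_ *+ K]mulr_natr div1r mulVf // pnatr_eq0 -lt0n.
Qed.

Lemma simplex_lerp q q' t : in_simplex q -> in_simplex q' -> 0 <= t <= 1 ->
  in_simplex (fun a => q a + t * (q' a - q a)).
Proof.
move=> [q0 q1] [q'0 q'1] /andP [t0 t1]; split=> [a|].
  by have := q0 a; have := q'0 a; nra.
by rewrite big_split /= -mulr_sumr sumrB q1 q'1 subrr mulr0 addr0.
Qed.

Lemma simplex_dim_gt0 q : in_simplex q -> (0 < K)%N.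
Proof. by case: K q => [q [_]|//]; rewrite big_ord0 => /eqP; rewrite eq_sym oner_eq0. Qed.

Lemma sum_sqrt_le_sqrt_sum w x : in_simplex w -> (forall a, 0 <= x a) ->
  \sum_a w a * Num.sqrt (x a) <= Num.sqrt (\sum_a w a * x a).
Proof.
move=> [w0 w1] x0; set V := \sum_a w a * x a.
have wx0 a : 0 <= w a * x a by rewrite mulr_ge0.
have [V0|V_neq0] := eqVneq V 0.
  rewrite V0 sqrtr0 big1 // => a _.
  have /eqP := psumr_eq0P (fun a _ => wx0 a) V0 (isT : xpredT a).
  by rewrite mulf_eq0 => /orP [/eqP -> | /eqP ->]; rewrite ?mul0r ?sqrtr0 ?mulr0.
have V_gt0 : 0 < V by rewrite lt0r V_neq0 sumr_ge0.
have sV_gt0 : 0 < Num.sqrt V by rewrite sqrtr_gt0.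
have amgm a : w a * Num.sqrt (x a) <= (w a * x a / Num.sqrt V + w a * Num.sqrt V) / 2.
  have -> : (w a * x a / Num.sqrt V + w a * Num.sqrt V) / 2
      = w a * ((Num.sqrt (x a) ^+ 2 + Num.sqrt V ^+ 2) / (2 * Num.sqrt V)).
    by rewrite sqr_sqrtr //; field; rewrite gt_eqF.
  rewrite ler_wpM2l // ler_pdivlMr ?mulr_gt0 //.
  by have := sqr_ge0 (Num.sqrt (x a) - Num.sqrt V); rewrite sqrrB; lra.
apply: le_trans (ler_sum _ (fun a _ => amgm a)) _.
rewrite -mulr_suml big_split /= -mulr_suml -mulr_suml w1 mul1r -/V.
rewrite -{1}(sqr_sqrtr (ltW V_gt0)).
by have -> : (Num.sqrt V ^+ 2 / Num.sqrt V + Num.sqrt V) / 2 = Num.sqrt V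
  by field; rewrite gt_eqF.
Qed.

Lemma sum_sqrt_simplex_le q : in_simplex q -> \sum_a Num.sqrt (q a) <= Num.sqrt K%:R.
Proof.
move=> qS; have K_gt0 := simplex_dim_gt0 qS.
have K_pos : (0 : R) < K%:R by rewrite ltr0n.
have := sum_sqrt_le_sqrt_sum (uniform_simplex K_gt0) (proj1 qS).
rewrite -!mulr_sumr (proj2 qS) mulr1 !div1r sqrtrV ?ler0n // => jensen.
have sK_gt0 : 0 < Num.sqrt (K%:R : R) by rewrite sqrtr_gt0.
have -> : Num.sqrt (K%:R : R) = K%:R * (Num.sqrt K%:R)^-1.
  by rewrite -{2}(sqr_sqrtr (ltW K_pos)) expr2 mulfK ?gt_eqF.
by rewrite -ler_pdivrMl.
Qed.

Lemma bregman_ge0 q q' : 0 <= bregman q q'.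
Proof. by apply: sumr_ge0 => a _; rewrite divr_ge0 ?sqr_ge0 ?sqrtr_ge0. Qed.

Lemma bregman_self q : bregman q q = 0.
Proof. by rewrite /bregman big1 // => a _; rewrite subrr expr0n mul0r. Qed.

Lemma bregman_ge_term q q' a :
  (Num.sqrt (q a) - Num.sqrt (q' a)) ^+ 2 / Num.sqrt (q' a) <= bregman q q'.
Proof.
rewrite /bregman (bigD1 a) //= lerDl.
by apply: sumr_ge0 => b _; rewrite divr_ge0 ?sqr_ge0 ?sqrtr_ge0.
Qed.

End Simplex.

Arguments unit_vec {R K}.
Arguments unit_vec_simplex {R K}.

Section TsallisFTRL.
Variables (R : realType) (K : nat) (L : 'I_K -> R) (ie : R).
Implicit Types (q : 'I_K -> R) (t : R).

Definition ftrl_tsallis q : R :=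
  - \sum_a q a * L a - ie * \sum_a 2 * Num.sqrt (q a).

Lemma ftrl_tsallisB q q' : ftrl_tsallis q - ftrl_tsallis q' =
  \sum_a (- ((q a - q' a) * L a) - ie * (2 * (Num.sqrt (q a) - Num.sqrt (q' a)))).
Proof.
have e a : - ((q a - q' a) * L a) - ie * (2 * (Num.sqrt (q a) - Num.sqrt (q' a)))
    = (- (q a * L a) + q' a * L a)
      + (- (ie * (2 * Num.sqrt (q a))) + ie * (2 * Num.sqrt (q' a))) by ring.
rewrite /ftrl_tsallis (eq_bigr _ (fun a _ => e a)) !big_split /= !sumrN -!mulr_sumr; ring.
Qed.

Variable P : 'I_K -> R.
Hypotheses (ie_gt0 : 0 < ie) (P_simplex : in_simplex P).
Hypothesis P_min : forall q, in_simplex q -> ftrl_tsallis P <= ftrl_tsallis q.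

Let ftrl_lerp_ge0 q t : in_simplex q -> 0 <= t <= 1 ->
  0 <= \sum_a (- (t * (q a - P a) * L a)
                - ie * (2 * (Num.sqrt (P a + t * (q a - P a)) - Num.sqrt (P a)))).
Proof.
move=> qS t01; have := P_min (simplex_lerp P_simplex qS t01).
by rewrite -subr_ge0 ftrl_tsallisB; under eq_bigr do rewrite addrAC subrr add0r.
Qed.

(* The [sqrt] barrier has infinite slope at the boundary: moving mass [s ^+ 2]
   towards a vertex gains order [s] in the regularizer but costs order [s ^+ 2]. *)
Lemma ftrl_tsallis_argmin_gt0 b : 0 < P b.
Proof.
rewrite lt0r (proj1 P_simplex) andbT; apply/negP => /eqP Pb0.
set X := \sum_a (unit_vec b a - P a) * L a.
set C := 2 * ie * Num.sqrt K%:R - X.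
suff : 0 <= - (2 * ie) by rewrite oppr_ge0 pmulr_rle0 // leNgt ie_gt0.
apply: (ge0_of_ge_vanishing (C := C)) => s /andP [s_gt0 s_le1].
have t01 : 0 <= s ^+ 2 <= 1 by rewrite sqr_ge0 /= expr2; nra.
have sqrt_lerp a : (1 - s ^+ 2) * Num.sqrt (P a) + s * unit_vec b a
    <= Num.sqrt (P a + s ^+ 2 * (unit_vec b a - P a)).
  have P0 := proj1 P_simplex a; rewrite /unit_vec.
  have [<-|ba] := eqVneq b a; rewrite /= ?mulr1n ?mulr0n.
    rewrite Pb0 sqrtr0 mulr0 !add0r subr0 !mulr1.
    by rewrite sqrtr_sqr (ger0_norm (ltW s_gt0)).
  have sP0 := sqrtr_ge0 (P a); rewrite mulr0 addr0 sub0r.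
  apply: sqrt_ge_sqr; [nra|nra|].
  rewrite exprMn sqr_sqrtr //; case/andP: t01 => t0 t1.
  have : 0 <= (1 - s ^+ 2) * s ^+ 2 * P a by rewrite mulr_ge0 // mulr_ge0 ?subr_ge0.
  nra.
have gain : s - s ^+ 2 * Num.sqrt K%:R <= \sum_a
    (Num.sqrt (P a + s ^+ 2 * (unit_vec b a - P a)) - Num.sqrt (P a)).
  apply: le_trans (ler_sum _ (fun a _ => lerB (sqrt_lerp a) (lexx (Num.sqrt (P a))))).
  rewrite (eq_bigr (fun a => s * unit_vec b a - s ^+ 2 * Num.sqrt (P a))); last first.
    by move=> a _; ring.
  rewrite sumrB -!mulr_sumr (proj2 (unit_vec_simplex b)) mulr1 lerD2l lerN2.
  by rewrite ler_wpM2l ?sqr_ge0 ?sum_sqrt_simplex_le.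
have := ftrl_lerp_ge0 (unit_vec_simplex b) t01.
under eq_bigr do rewrite -mulrA.
rewrite big_split /= sumrN -mulr_sumr -/X sumrN -mulr_sumr -mulr_sumr.
move: gain; set D := \sum_a _ => gain lerp_ge0.
have : s * (2 * ie) <= s * (s * C).
  by have := ler_wpM2l (ltW ie_gt0) gain; rewrite /C; lra.
by rewrite ler_pM2l //; lra.
Qed.

Lemma ftrl_tsallis_argmin_bregman q : in_simplex q ->
  ie * bregman q P <= ftrl_tsallis q - ftrl_tsallis P.
Proof.
move=> qS; have sP_gt0 a : 0 < Num.sqrt (P a) by rewrite sqrtr_gt0 ftrl_tsallis_argmin_gt0.
(* [G] is the derivative of [ftrl_tsallis] at [P] in the direction [q - P], which
   minimality makes nonnegative; the Bregman term is exactly the remainder. *)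
set G := \sum_a (- ((q a - P a) * L a) - ie * ((q a - P a) / Num.sqrt (P a))).
have -> : ie * bregman q P <= ftrl_tsallis q - ftrl_tsallis P = (0 <= G).
  rewrite -subr_ge0 ftrl_tsallisB /bregman mulr_sumr -sumrB; congr (0 <= _).
  apply: eq_bigr => a _.
  have := sqr_sqrtr (ltW (ftrl_tsallis_argmin_gt0 a)); have := sqr_sqrtr (proj1 qS a).
  move: (sP_gt0 a); set v := Num.sqrt (P a); set w := Num.sqrt (q a) => v_gt0 <- <-.
  by field; rewrite gt_eqF.
set C := ie * \sum_a (q a - P a) ^+ 2 / Num.sqrt (P a) ^+ 3.
apply: (ge0_of_ge_vanishing (C := C)) => t /andP [t_gt0 t_le1].
have t01 : 0 <= t <= 1 by rewrite ltW.
have taylor a : - (t * (q a - P a) * L a)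
      - ie * (2 * (Num.sqrt (P a + t * (q a - P a)) - Num.sqrt (P a)))
    <= t * (- ((q a - P a) * L a) - ie * ((q a - P a) / Num.sqrt (P a)))
       + t ^+ 2 * (ie * ((q a - P a) ^+ 2 / Num.sqrt (P a) ^+ 3)).
  have := sqrt_sub_ge_taylor (sP_gt0 a) (sqrtr_ge0 (P a + t * (q a - P a))).
  have lerp0 := proj1 (simplex_lerp P_simplex qS t01) a.
  rewrite !sqr_sqrtr ?(ltW (ftrl_tsallis_argmin_gt0 a)) //.
  move=> /(_ _ erefl); have := sP_gt0 a.
  set v := Num.sqrt (P a); set u := Num.sqrt _; set d := q a - P a => v_gt0 hu.
  rewrite -subr_ge0.
  have -> : t * (- (d * L a) - ie * (d / v)) + t ^+ 2 * (ie * (d ^+ 2 / v ^+ 3))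
      - (- (t * d * L a) - ie * (2 * (u - v)))
      = 2 * ie * ((u - v) - (t * d / (2 * v) - (t * d) ^+ 2 / (2 * v ^+ 3))).
    by field; rewrite gt_eqF.
  by rewrite mulr_ge0 ?subr_ge0 // mulr_ge0 // (ltW ie_gt0).
have := le_trans (ftrl_lerp_ge0 qS t01) (ler_sum _ (fun a _ => taylor a)).
rewrite big_split /= -!mulr_sumr -/G -/C => tGC.
have : 0 <= t * (G + t * C) by rewrite mulrDr mulrA -expr2.
by rewrite pmulr_rge0 //; lra.
Qed.

End TsallisFTRL.

Section HistoryExpectation.
Variables (R : realType) (K : nat) (p : seq 'I_K -> 'I_K -> R).
Hypothesis p_simplex : forall h, in_simplex (p h).
Implicit Types (h g : seq 'I_K) (f : seq 'I_K -> R) (phi : seq 'I_K -> 'I_K -> R).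

Fixpoint expect h n f : R :=
  if n is n'.+1 then \sum_a p h a * expect (a :: h) n' f else f h.

Fixpoint cumul phi g : R :=
  if g is A :: h then cumul phi h + phi h A else 0.

Lemma sum_policy h : \sum_a p h a = 1.
Proof. exact: (proj2 (p_simplex h)). Qed.

Lemma expect_le n h f f' : (forall g, f g <= f' g) -> expect h n f <= expect h n f'.
Proof.
move=> le_ff'; elim: n h => [|n IHn] h /=; first exact: le_ff'.
by apply: ler_sum => a _; apply: ler_wpM2l; [exact: (proj1 (p_simplex h)) | exact: IHn].
Qed.

Lemma eq_expect n h f f' : (forall g, f g = f' g) -> expect h n f = expect h n f'.
Proof. by move=> eq_ff'; apply/le_anti; rewrite !expect_le // => g; rewrite eq_ff'. Qed.

Lemma expect_cst n h c : expect h n (fun=> c) = c.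
Proof.
elim: n h => [|n IHn] h //=.
by under eq_bigr do rewrite IHn; rewrite -mulr_suml sum_policy mul1r.
Qed.

Lemma expectD n h f f' :
  expect h n (fun g => f g + f' g) = expect h n f + expect h n f'.
Proof.
elim: n h => [|n IHn] h //=.
by rewrite -big_split /=; apply: eq_bigr => a _; rewrite IHn mulrDr.
Qed.

Lemma expectZ n h c f : expect h n (fun g => c * f g) = c * expect h n f.
Proof.
elim: n h => [|n IHn] h //=.
by rewrite mulr_sumr; apply: eq_bigr => a _; rewrite IHn mulrCA.
Qed.

Lemma expectB n h f f' :
  expect h n (fun g => f g - f' g) = expect h n f - expect h n f'.
Proof.
rewrite -mulN1r -expectZ -expectD; apply: eq_expect => g; ring.
Qed.

Lemma expect_ge0 n h f : (forall g, 0 <= f g) -> 0 <= expect h n f.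
Proof. by move=> f0; rewrite -(expect_cst n h 0); apply: expect_le. Qed.

Lemma expect_size n h (F : nat -> R) : expect h n (fun g => F (size g)) = F (size h + n)%N.
Proof.
elim: n h => [|n IHn] h /=; first by rewrite addn0.
by under eq_bigr do rewrite IHn /= addSnnS; rewrite -mulr_suml sum_policy mul1r.
Qed.

Lemma expect_sqrt n h f : (forall g, 0 <= f g) ->
  expect h n (fun g => Num.sqrt (f g)) <= Num.sqrt (expect h n f).
Proof.
move=> f0; elim: n h => [|n IHn] h //=.
apply: le_trans (sum_sqrt_le_sqrt_sum (p_simplex h) (fun a => expect_ge0 n (a :: h) f0)).
by apply: ler_sum => a _; apply: ler_wpM2l; [exact: (proj1 (p_simplex h)) | exact: IHn].
Qed.

Lemma cumulB phi phi' g :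
  cumul (fun h A => phi h A - phi' h A) g = cumul phi g - cumul phi' g.
Proof. by elim: g => [|A h IHh] /=; rewrite ?subrr // IHh; ring. Qed.

Lemma expect_cumul_le phi c : (forall h, \sum_a p h a * phi h a <= c) ->
  forall n h, expect h n (cumul phi) <= cumul phi h + n%:R * c.
Proof.
move=> phi_le; elim=> [|n IHn] h /=; first by rewrite mul0r addr0.
have step a : p h a * expect (a :: h) n (cumul phi)
    <= (cumul phi h + n%:R * c) * p h a + p h a * phi h a.
  by have := ler_wpM2l (proj1 (p_simplex h) a) (IHn (a :: h)); rewrite /= !mulrDr; lra.
apply: le_trans (ler_sum _ (fun a _ => step a)) _.
by rewrite big_split /= -mulr_sumr sum_policy mulr1 -natr1; have := phi_le h; lra.
Qed.

Lemma expect_cumul_mono phi psi :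
  (forall h, \sum_a p h a * phi h a <= \sum_a p h a * psi h a) ->
  forall n, expect [::] n (cumul phi) <= expect [::] n (cumul psi).
Proof.
move=> phi_le n; rewrite -subr_le0 -expectB.
rewrite (eq_expect _ _ (fun g => esym (cumulB phi psi g))).
have := @expect_cumul_le (fun h A => phi h A - psi h A) 0.
move=> /(_ _ n [::]); rewrite /= mulr0 addr0; apply=> h.
rewrite (eq_bigr (fun a => p h a * phi h a - p h a * psi h a)) ?sumrB ?subr_le0 //.
by move=> a _; rewrite mulrBr.
Qed.

Lemma exp_reward_expect (y : nat -> 'I_K -> R) n h :
  exp_reward y p h n =
    expect h n (cumul (fun g A => y (size g) A)) - cumul (fun g A => y (size g) A) h.
Proof.
elim: n h => [|n IHn] h /=; first by rewrite subrr.
under eq_bigr do rewrite IHn /=.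
rewrite (eq_bigr (fun a => p h a * expect (a :: h) n (cumul (fun g A => y (size g) A))
    - cumul (fun g A => y (size g) A) h * p h a)); last by move=> a _; ring.
by rewrite sumrB -mulr_sumr sum_policy mulr1.
Qed.

Lemma cumul_arm (y : nat -> 'I_K -> R) u g :
  cumul (fun h (_ : 'I_K) => y (size h) u) g = \sum_(t < size g) y t u.
Proof. by elim: g => [|A h IHh] /=; rewrite ?big_ord0 // big_ord_recr /= IHh. Qed.

Lemma arm_regret_expect (y : nat -> 'I_K -> R) u n :
  \sum_(t < n) y t u - exp_reward y p [::] n
    = expect [::] n (cumul (fun h A => y (size h) u - y (size h) A)).
Proof.
rewrite exp_reward_expect -(expect_size n [::] (fun k => \sum_(t < k) y t u)) /= subr0.
rewrite -(eq_expect _ _ (cumul_arm y u)) -expectB.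
exact: eq_expect (fun g => esym (cumulB _ _ g)).
Qed.

End HistoryExpectation.

Section AdaFTRL.
Variables (R : realType) (K : nat) (M m : R) (y : nat -> 'I_K -> R)
  (p : seq 'I_K -> 'I_K -> R).
Hypotheses (K_ge2 : (2 <= K)%N) (m_le_M : m <= M).
Hypothesis y_range : forall t a, m <= y t a <= M.
Hypothesis p_adaftrl : adaftrl_policy M y p.
Implicit Types (h g : seq 'I_K) (q : 'I_K -> R) (ie : R).

Local Notation sqrtK := (Num.sqrt (K%:R : R)).
Local Notation cK := (2 * (Num.sqrt (K%:R : R) - 1)).
Local Notation yhat := (yhat M y p).
Local Notation delta := (delta M y p).
Local Notation inv_eta := (inv_eta M y p).
Local Notation ftrl_obj := (ftrl_obj M y p).
(* [iw_loss h A] is [M - yhat h A A], the importance-weighted loss of the played arm *)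
Local Notation iw_loss h A := ((M - y (size h) A) / p h A).
Local Notation est_reward := (cumul (fun h A => \sum_a p h a * yhat h A a)).
Local Notation stab_sum := (cumul (fun h A => (M - y (size h) A) ^+ 2 / Num.sqrt (p h A))).

Lemma sqrtK_gt1 : 1 < sqrtK.
Proof. by rewrite -[X in X < _]sqrtr1 ltr_sqrt ?ltr1n // ltr0n (ltnW K_ge2). Qed.

Lemma cK_gt0 : 0 < cK.
Proof. by have := sqrtK_gt1; lra. Qed.

Lemma policy_simplex h : in_simplex (p h).
Proof.
case: h => [|A h]; last exact: (proj1 ((proj2 p_adaftrl) A h)).
rewrite (_ : p [::] = fun=> 1 / K%:R); last exact/funext/(proj1 p_adaftrl).
exact/uniform_simplex/ltnW.
Qed.

Lemma policy_ge0 h a : 0 <= p h a.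
Proof. exact: (proj1 (policy_simplex h)). Qed.

Lemma policy_sum1 h : \sum_a p h a = 1.
Proof. exact: (proj2 (policy_simplex h)). Qed.

Lemma policy_argmin h q : in_simplex q -> ftrl_obj h (p h) <= ftrl_obj h q.
Proof.
case: h => [|A h]; last exact: (proj2 ((proj2 p_adaftrl) A h)).
by move=> _; rewrite /Defs.ftrl_obj /= big1 ?mul0r ?big1 // => a _; rewrite mulr0.
Qed.

Lemma iw_loss_ge0 h A : 0 <= iw_loss h A.
Proof.
have /andP [_ yM] := y_range (size h) A.
by rewrite divr_ge0 ?subr_ge0 ?policy_ge0.
Qed.

Lemma mul_iw_loss_le h A : p h A * iw_loss h A <= M - m.
Proof.
have /andP [my yM] := y_range (size h) A.
have [->|pA_neq0] := eqVneq (p h A) 0; first by rewrite mul0r subr_ge0.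
by rewrite mulrC divfK //; lra.
Qed.

Lemma inner_sub_yhat h A q : in_simplex q ->
  \sum_a (p h a - q a) * (- yhat h A a) = (p h A - q A) * iw_loss h A.
Proof.
move=> [_ q1]; rewrite /Defs.yhat.
rewrite (eq_bigr (fun a => unit_vec A a * ((p h a - q a) * iw_loss h a)
    + (- M) * (p h a - q a))); last by move=> a _; rewrite /unit_vec; ring.
rewrite big_split /= sum_unit_vecM -mulr_sumr sumrB q1 policy_sum1.
by rewrite subrr mulr0 addr0.
Qed.

Lemma inner_policy_yhat h A : \sum_a p h a * yhat h A a = M - p h A * iw_loss h A.
Proof.
rewrite /Defs.yhat (eq_bigr (fun a => unit_vec A a * - (p h a * iw_loss h a) + p h a * M)).
  by rewrite big_split /= sum_unit_vecM -mulr_suml policy_sum1 mul1r addrC.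
by move=> a _; rewrite /unit_vec; ring.
Qed.

Local Notation delta_obj ie h A q :=
  (\sum_a (p h a - q a) * (- yhat h A a) - ie * bregman q (p h)).

Lemma delta_obj_le ie h A q : 0 <= ie -> in_simplex q -> delta_obj ie h A q <= M - m.
Proof.
move=> ie0 qS; rewrite inner_sub_yhat //.
have := mul_iw_loss_le h A; have := iw_loss_ge0 h A; have := proj1 qS A.
by have := bregman_ge0 q (p h); nra.
Qed.

Lemma delta_le_of_obj_le ie h A X :
  (forall q, in_simplex q -> delta_obj ie h A q <= X) -> delta ie h A <= X.
Proof.
move=> ub; apply: ge_sup => [|_ [q [qS ->]]]; last exact: ub.
by exists (delta_obj ie h A (p h)), (p h); split => //; exact: policy_simplex.
Qed.

Lemma delta_obj_le_delta ie h A q : 0 <= ie -> in_simplex q ->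
  delta_obj ie h A q <= delta ie h A.
Proof.
move=> ie0 qS; apply: ub_le_sup; last by exists q.
by exists (M - m) => _ [q' [q'S ->]]; exact: delta_obj_le.
Qed.

Lemma delta_ge0 ie h A : 0 <= ie -> 0 <= delta ie h A.
Proof.
move=> ie0; apply: le_trans (delta_obj_le_delta h A ie0 (policy_simplex h)).
rewrite inner_sub_yhat ?subrr ?mul0r ?bregman_self ?mulr0 ?subr0 //; exact: policy_simplex.
Qed.

Lemma delta_le_range ie h A : 0 <= ie -> delta ie h A <= M - m.
Proof. by move=> ie0; apply: delta_le_of_obj_le => q; exact: delta_obj_le. Qed.

Lemma inv_eta_ge0 h : 0 <= inv_eta h.
Proof.
elim: h => [|A h IHh] //=; apply: addr_ge0 => //.
by rewrite divr_ge0 ?delta_ge0 // (ltW cK_gt0).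
Qed.

Lemma inv_eta_mul_delta_le h A :
  inv_eta h * delta (inv_eta h) h A <= (M - y (size h) A) ^+ 2 / Num.sqrt (p h A).
Proof.
set ie := inv_eta h; have ie0 : 0 <= ie := inv_eta_ge0 h.
have [ie_eq0|ie_neq0] := eqVneq ie 0.
  by rewrite ie_eq0 mul0r divr_ge0 ?sqr_ge0 ?sqrtr_ge0.
have ie_gt0 : 0 < ie by rewrite lt0r ie_neq0.
rewrite mulrC -ler_pdivlMr //; apply: delta_le_of_obj_le => q qS.
rewrite ler_pdivlMr // mulrC inner_sub_yhat //.
have [pA0|pA_neq0] := eqVneq (p h A) 0.
  rewrite pA0 sqrtr0 !invr0 !mulr0 sub0r; have := bregman_ge0 q (p h); nra.
have pA_gt0 : 0 < p h A by rewrite lt0r pA_neq0 policy_ge0.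
have sA_gt0 : 0 < Num.sqrt (p h A) by rewrite sqrtr_gt0.
have := stability_sqrt_bound sA_gt0 (sqrtr_ge0 (q A)) (iw_loss_ge0 h A) ie0.
rewrite !sqr_sqrtr ?(proj1 qS) ?(ltW pA_gt0) //.
have -> : (M - y (size h) A) ^+ 2 / Num.sqrt (p h A)
    = iw_loss h A ^+ 2 * Num.sqrt (p h A) ^+ 3.
  have := sqr_sqrtr (ltW pA_gt0); move: sA_gt0 (divfK pA_neq0 (M - y (size h) A)).
  by set s := Num.sqrt _ => s_gt0 <- <-; field; rewrite gt_eqF.
apply: le_trans; rewrite mulrBr lerD2l lerN2 expr2 -mulrA ler_wpM2l //.
by rewrite ler_wpM2l // bregman_ge_term.
Qed.

Lemma ftrl_obj_bregman h q : in_simplex q ->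
  inv_eta h * bregman q (p h) <= ftrl_obj h q - ftrl_obj h (p h).
Proof.
move=> qS; have [->|ie_neq0] := eqVneq (inv_eta h) 0.
  by rewrite mul0r subr_ge0 policy_argmin.
have ie_gt0 : 0 < inv_eta h by rewrite lt0r ie_neq0 inv_eta_ge0.
exact: (ftrl_tsallis_argmin_bregman ie_gt0 (policy_simplex h) (@policy_argmin h)).
Qed.

(* From one round to the next the minimal value of the objective drops by at most
   the estimated reward [<p_t, yhat_t>], plus [delta] for stability and
   [2 sqrtK (1/eta_{t+1} - 1/eta_t)] for the growth of the regularizer. *)
Lemma ftrl_obj_policy_ge g :
  - est_reward g <= ftrl_obj g (p g) + (2 * sqrtK + cK) * inv_eta g.
Proof.
elim: g => [|A h IHh].
  rewrite /Defs.ftrl_obj /= big1 ?mul0r ?subr0 ?oppr0 ?mulr0 ?addr0 // => a _.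
  by rewrite mulr0.
set g := A :: h; set ie := inv_eta h; set dl := delta ie h A.
have ie0 : 0 <= ie := inv_eta_ge0 h; have dl0 : 0 <= dl := delta_ge0 h A ie0.
set d := dl / cK; have d0 : 0 <= d by rewrite divr_ge0 // (ltW cK_gt0).
have -> : inv_eta g = ie + d by [].
have dlE : dl = cK * d by rewrite /d mulrC divfK // gt_eqF // cK_gt0.
have objE : ftrl_obj g (p g) = ftrl_obj h (p g)
    - \sum_a p g a * yhat h A a - d * \sum_a 2 * Num.sqrt (p g a).
  rewrite /Defs.ftrl_obj /= -/ie -/d.
  under eq_bigr do rewrite mulrDr.
  by rewrite big_split /=; ring.
have innerE : \sum_a (p h a - p g a) * (- yhat h A a)
    = \sum_a p g a * yhat h A a - \sum_a p h a * yhat h A a.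
  by rewrite -sumrB; apply: eq_bigr => a _; ring.
have := delta_obj_le_delta h A ie0 (policy_simplex g); rewrite innerE -/dl dlE.
have := ftrl_obj_bregman h (policy_simplex g).
have : d * \sum_a 2 * Num.sqrt (p g a) <= d * (2 * sqrtK).
  rewrite ler_wpM2l // -mulr_sumr ler_wpM2l //.
  exact: sum_sqrt_simplex_le (policy_simplex g).
move: IHh; rewrite objE /= -/ie; lra.
Qed.

Lemma ftrl_obj_unit_vec g u : ftrl_obj g (unit_vec u) = - Lhat M y p g u - inv_eta g * 2.
Proof.
rewrite /Defs.ftrl_obj sum_unit_vecM; congr (_ - inv_eta g * _).
rewrite -[RHS](sum_unit_vecM u (fun=> 2)); apply: eq_bigr => a _; rewrite /unit_vec.
by case: (u == a); rewrite /= ?mulr1n ?mulr0n ?sqrtr1 ?sqrtr0 ?mulr1 ?mul1r ?mul0r ?mulr0.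
Qed.

Lemma estimated_regret_le_inv_eta g u :
  Lhat M y p g u - est_reward g <= 2 * (cK * inv_eta g).
Proof.
have := policy_argmin g (unit_vec_simplex u); rewrite ftrl_obj_unit_vec.
by have := ftrl_obj_policy_ge g; have := inv_eta_ge0 g; lra.
Qed.

Lemma inv_eta_sqr_le g :
  (cK * inv_eta g) ^+ 2 <= 2 * cK * stab_sum g + (M - m) * (cK * inv_eta g).
Proof.
elim: g => [|A h IHh]; first by rewrite /= mulr0 expr0n /= mulr0 add0r mulr0.
set ie := inv_eta h; set dl := delta ie h A.
have ie0 : 0 <= ie := inv_eta_ge0 h; have dl0 : 0 <= dl := delta_ge0 h A ie0.
have dl_le : dl <= M - m := delta_le_range h A ie0.
have stab := inv_eta_mul_delta_le h A; rewrite -/ie -/dl in stab.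
have cK0 := cK_gt0.
have -> : cK * inv_eta (A :: h) = cK * ie + dl.
  by rewrite /= -/ie -/dl mulrDr mulrCA mulfV ?mulr1 // gt_eqF.
have : cK * ie * dl <= cK * ((M - y (size h) A) ^+ 2 / Num.sqrt (p h A)).
  by rewrite -mulrA ler_wpM2l // ltW.
have : dl ^+ 2 <= (M - m) * dl by rewrite expr2 ler_wpM2r.
by move: IHh => /=; rewrite -/ie; nra.
Qed.

Lemma stab_sum_ge0 g : 0 <= stab_sum g.
Proof. by elim: g => [|A h IHh] //=; rewrite addr_ge0 // divr_ge0 ?sqr_ge0 ?sqrtr_ge0. Qed.

Lemma estimated_regret_le g u :
  Lhat M y p g u - est_reward g <= 2 * (M - m) + 2 * Num.sqrt (2 * cK * stab_sum g).
Proof.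
have Mm0 : 0 <= M - m by rewrite subr_ge0.
have := le_add_sqrt_of_sqr_le (mulr_ge0 (ltW cK_gt0) (inv_eta_ge0 g))
  (mulr_ge0 (mulr_ge0 (ler0n R 2) (ltW cK_gt0)) (stab_sum_ge0 g)) Mm0 (inv_eta_sqr_le g).
by have := estimated_regret_le_inv_eta g u; lra.
Qed.

Lemma Lhat_cumul g u : Lhat M y p g u = cumul (fun h A => yhat h A u) g.
Proof. by elim: g => [|A h IHh] //=; rewrite IHh. Qed.

(* the estimate of an arm is unbiased when it can be played, and equals [M] otherwise *)
Lemma arm_le_expected_yhat h u : y (size h) u <= \sum_a p h a * yhat h a u.
Proof.
rewrite /Defs.yhat (eq_bigr (fun a => unit_vec u a * (p h a * ((y (size h) u - M) / p h u))
    + M * p h a)); last by move=> a _; rewrite /unit_vec eq_sym; ring.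
rewrite big_split /= sum_unit_vecM -mulr_sumr policy_sum1 mulr1.
have [->|pu_neq0] := eqVneq (p h u) 0; last by rewrite mulrC divfK // subrK.
by rewrite mul0r add0r; case/andP: (y_range (size h) u).
Qed.

Lemma expected_inner_yhat h :
  \sum_a p h a * (\sum_b p h b * yhat h a b) = \sum_a p h a * y (size h) a.
Proof.
apply: eq_bigr => a _; rewrite inner_policy_yhat.
by have [->|pa_neq0] := eqVneq (p h a) 0; [rewrite !mul0r | field].
Qed.

Lemma arm_regret_le_estimate u h :
  \sum_a p h a * (y (size h) u - y (size h) a)
    <= \sum_a p h a * (yhat h a u - \sum_b p h b * yhat h a b).
Proof.
rewrite !(eq_bigr _ (fun a _ => mulrBr _ _ _)) !sumrB expected_inner_yhat lerD2r.
by rewrite -mulr_suml policy_sum1 mul1r arm_le_expected_yhat.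
Qed.

Lemma expected_stab_le h :
  \sum_a p h a * ((M - y (size h) a) ^+ 2 / Num.sqrt (p h a)) <= (M - m) ^+ 2 * sqrtK.
Proof.
apply: le_trans (_ : \sum_a (M - m) ^+ 2 * Num.sqrt (p h a) <= _); last first.
  by rewrite -mulr_sumr ler_wpM2l ?sqr_ge0 // (sum_sqrt_simplex_le (policy_simplex h)).
apply: ler_sum => a _; have pa0 := proj1 (policy_simplex h) a.
have /andP [my yM] := y_range (size h) a.
have [->|pa_neq0] := eqVneq (p h a) 0; first by rewrite sqrtr0 !mul0r mulr0.
have sa_gt0 : 0 < Num.sqrt (p h a) by rewrite sqrtr_gt0 lt0r pa_neq0.
have -> : p h a * ((M - y (size h) a) ^+ 2 / Num.sqrt (p h a))
    = (M - y (size h) a) ^+ 2 * Num.sqrt (p h a).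
  by move: sa_gt0 (sqr_sqrtr pa0); set s := Num.sqrt _ => s_gt0 <-; field; rewrite gt_eqF.
by rewrite ler_wpM2r ?(ltW sa_gt0) //; nra.
Qed.

Lemma expect_sqrt_stab_le T :
  expect p [::] T (fun g => Num.sqrt (2 * cK * stab_sum g))
    <= Num.sqrt (2 * cK * (T%:R * ((M - m) ^+ 2 * sqrtK))).
Proof.
have cK0 : 0 <= 2 * cK by rewrite mulr_ge0 // (ltW cK_gt0).
apply: le_trans (expect_sqrt policy_simplex _ _ (fun g => mulr_ge0 cK0 (stab_sum_ge0 g))) _.
have budget_ge0 : 0 <= T%:R * ((M - m) ^+ 2 * sqrtK).
  by rewrite mulr_ge0 // mulr_ge0 ?sqr_ge0 ?sqrtr_ge0.
have /ler_sqrt -> := mulr_ge0 cK0 budget_ge0.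
rewrite [X in X <= _](_ : _ = 2 * cK * expect p [::] T stab_sum); last exact: expectZ.
rewrite ler_wpM2l //.
by have := expect_cumul_le policy_simplex expected_stab_le T [::]; rewrite /= add0r.
Qed.

Lemma regret_arm_le u T : \sum_(t < T) y t u - exp_reward y p [::] T
  <= 2 * (M - m) + 2 * Num.sqrt (2 * cK * (T%:R * ((M - m) ^+ 2 * sqrtK))).
Proof.
rewrite (arm_regret_expect policy_simplex).
apply: le_trans (expect_cumul_mono policy_simplex (arm_regret_le_estimate u) T) _.
rewrite (eq_expect policy_simplex _ _ (fun g => cumulB _ _ g)) (expectB policy_simplex).
rewrite -(eq_expect policy_simplex _ _ (fun g => Lhat_cumul g u)) -(expectB policy_simplex).
apply: le_trans (expect_le policy_simplex _ _ (fun g => estimated_regret_le g u)) _.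
rewrite expectD (expect_cst policy_simplex).
rewrite [X in _ + X <= _](_ : _ = 2 * expect p [::] T (fun g => Num.sqrt (2 * cK * stab_sum g))).
  by have := expect_sqrt_stab_le T; lra.
exact: expectZ.
Qed.

End AdaFTRL.

Theorem theorem9 (R : realType) (K : nat) (hK : (2 <= K)%N) (M m : R)
  (hmM : m <= M) (y : nat -> 'I_K -> R)
  (hy : forall t a, m <= y t a <= M)
  (p : seq 'I_K -> 'I_K -> R) (hp : adaftrl_policy M y p)
  (T : nat) (hT : (1 <= T)%N) :
  regret y p T <= 4 * (M - m) * Num.sqrt (K%:R * T%:R) + 2 * (M - m).
Proof.
have a0 : 'I_K := Ordinal (ltnW hK).
rewrite /regret lerBlDr; apply: ge_sup; first by exists (\sum_(t < T) y t a0), a0.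
move=> _ [u _ <-]; rewrite -lerBlDr.
apply: le_trans (regret_arm_le hK hmM hy hp u T) _.
rewrite addrC lerD2r; apply: sqrt_budget_le => //.
by rewrite subr_ge0.
Qed.
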